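(* Let $\mathcal{A}\in\mathbb{R}^{d_1\times\cdots\times d_k}$ be an order-$k$ real tensor and let $1\le p\le q\le\infty$. Then \[ \|\mathcal{A}\|_p\le \|\mathcal{A}\|_q\le \dim(\mathcal{A})^{\frac1p-\frac1q}\,\|\mathcal{A}\|_p . \]
   Context: For $\mathcal{A}=(a_{i_1\dots i_k})\in\mathbb{R}^{d_1\times\cdots\times d_k}$, $\dim(\mathcal{A})=\prod_{n=1}^k d_n$. The associated multilinear functional is $\mathcal{A}(\mathbf{x}_1,\dots,\mathbf{x}_k)=\sum_{i_1,\dots,i_k} a_{i_1\dots i_k}x^{(1)}_{i_1}\cdots x^{(k)}_{i_k}$ for $\mathbf{x}_n\in\mathbb{R}^{d_n}$. For $1\le p\le\infty$ the $l^p$-norm of $\mathcal{A}$ is defined as $\|\mathcal{A}\|_p=\sup\{\mathcal{A}(\mathbf{x}_1,\dots,\mathbf{x}_k):\ \mathbf{x}_n\in\mathbb{R}^{d_n},\ \|\mathbf{x}_n\|_p=1,\ n\in[k]\}$, where $\|\mathbf{x}_n\|_p$ is the vector $l^p$-norm. (This is used even for matrices, which are viewed as bilinear functionals; it is not the classical induced matrix $l^p$-norm when $p\neq 2$.) *)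

From HB Require Import structures.
From mathcomp Require Import all_boot all_order all_algebra.
From mathcomp Require Import all_classical all_reals all_analysis.
Set Implicit Arguments. Unset Strict Implicit. Unset Printing Implicit Defensive.
Import Order.TTheory GRing.Theory Num.Theory.
Local Open Scope ring_scope.

Definition tindex (k : nat) (d : 'I_k -> nat) : finType :=
  {dffun forall n : 'I_k, 'I_(d n)}.

Definition tensor (R : realType) (k : nat) (d : 'I_k -> nat) :=
  tindex d -> R.

Definition tdim (k : nat) (d : 'I_k -> nat) : nat := (\prod_(n < k) d n)%N.

Definition tform (R : realType) (k : nat) (d : 'I_k -> nat)
  (A : tensor R d) (x : forall n : 'I_k, 'I_(d n) -> R) : R :=
  \sum_(i : tindex d) A i * \prod_(n < k) x n (i n).

Definition lpnorm (R : realType) (p : \bar R) (m : nat) (x : 'I_m -> R) : R :=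
  match p with
  | r%:E => (\sum_(i < m) `|x i| `^ r) `^ r^-1
  | _ => \big[Num.max/0]_(i < m) `|x i|
  end.

Definition einv (R : realType) (p : \bar R) : R :=
  match p with
  | r%:E => r^-1
  | _ => 0
  end.

Definition tnorm (R : realType) (p : \bar R) (k : nat) (d : 'I_k -> nat)
  (A : tensor R d) : R :=
  sup [set tform A x | x in
        [set x : forall n : 'I_k, 'I_(d n) -> R | forall n, lpnorm p (x n) = 1]].

From HB Require Import structures.
From mathcomp Require Import all_boot all_order all_algebra.
From mathcomp Require Import all_classical all_reals all_analysis.
From mathcomp Require Import ring.
Set Implicit Arguments.
Unset Strict Implicit.
Unset Printing Implicit Defensive.
Local Open Scope classical_set_scope.
Import Order.TTheory GRing.Theory Num.Theory.
Local Open Scope ring_scope.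

(* The l^p norms on R^m decrease in p, and Hölder's inequality against the
   constant vector gives ||x||_p <= m^(1/p - 1/q) ||x||_q for p <= q. Both pass
   to tensors factor by factor: for l^p-unit vectors x_n the vectors
   y_n = x_n / ||x_n||_q are l^q-unit vectors and, by multilinearity,
   A(x) = (prod_n ||x_n||_q) A(y). Hence ||A||_p <= (prod_n K_n) ||A||_q as soon
   as ||.||_q <= K_n ||.||_p on the n-th factor. Taking K_n = 1 gives the first
   inequality; exchanging p and q and taking K_n = d_n^(1/p - 1/q), whose
   product is dim(A)^(1/p - 1/q), gives the second. *)

Section LpNorm.
Variable R : realType.
Implicit Types (p q : \bar R) (r s : R).

Lemma powRK r a : r != 0 -> 0 <= a -> (a `^ r) `^ r^-1 = a.
Proof. by move=> r0 a0; rewrite -powRrM mulfV // powRr1. Qed.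

Lemma powRKV r a : r != 0 -> 0 <= a -> (a `^ r^-1) `^ r = a.
Proof. by move=> r0 a0; rewrite -powRrM mulVf // powRr1. Qed.

Lemma prodr_powR (I : Type) (s : seq I) (f : I -> R) e :
  (forall i, 0 <= f i) -> \prod_(i <- s) f i `^ e = (\prod_(i <- s) f i) `^ e.
Proof.
move=> f0; elim: s => [|a s IH]; first by rewrite !big_nil powR1.
by rewrite !big_cons IH powRM // prodr_ge0.
Qed.

Lemma sum_powR_ge0 m (x : 'I_m -> R) r : 0 <= \sum_i `|x i| `^ r.
Proof. by apply: sumr_ge0 => i _; apply: powR_ge0. Qed.

Lemma lpnorm_ge0 p m (x : 'I_m -> R) : 0 <= lpnorm p x.
Proof. by case: p => [r| |] /=; rewrite ?powR_ge0 ?bigmax_ge_id. Qed.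

Lemma eq_lpnorm p m (x y : 'I_m -> R) :
  (forall i, `|x i| = `|y i|) -> lpnorm p x = lpnorm p y.
Proof.
by move=> e; case: p => [r| |] /=; [congr (_ `^ _)|..];
  apply: eq_bigr => i _; rewrite e.
Qed.

Lemma lpnormZ p m (x : 'I_m -> R) c : (0 < p)%E ->
  lpnorm p (fun i => c * x i) = `|c| * lpnorm p x.
Proof.
case: p => [r| |] //= => [r0|_].
- rewrite (eq_bigr (fun i => `|c| `^ r * `|x i| `^ r)) => [|i _]; last first.
    by rewrite normrM powRM.
  by rewrite -mulr_sumr powRM ?powR_ge0 ?sum_powR_ge0 // powRK ?gt_eqF.
- apply: (big_ind2 (fun u v => u = `|c| * v)) => [|_ v1 _ v2 -> ->|i _].
  + by rewrite mulr0.
  + by rewrite maxr_pMr.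
  + by rewrite normrM.
Qed.

Lemma normr_le_lpnorm p m (x : 'I_m -> R) j : (0 < p)%E -> `|x j| <= lpnorm p x.
Proof.
case: p => [r| |] //= => [r0|_]; last exact: le_bigmax.
rewrite -{1}(@powRK r `|x j|) ?gt_eqF //.
apply: ge0_ler_powR; rewrite ?nnegrE ?powR_ge0 ?sum_powR_ge0 //.
  by rewrite invr_ge0 ltW.
by rewrite (bigD1 j) //= lerDl sumr_ge0 // => i _; rewrite powR_ge0.
Qed.

Lemma lpnorm_eq0 p m (x : 'I_m -> R) : (0 < p)%E ->
  lpnorm p x = 0 <-> forall i, x i = 0.
Proof.
move=> p0; split=> [x0 i|x0].
  by apply/normr0_eq0/le_anti; rewrite normr_ge0 -x0 normr_le_lpnorm.
rewrite (@eq_lpnorm p m x (fun i => 0 * x i)) ?lpnormZ ?normr0 ?mul0r // => i.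
by rewrite x0 mul0r.
Qed.

Lemma lpnorm_normalize p m (x : 'I_m -> R) : (0 < p)%E -> 0 < lpnorm p x ->
  lpnorm p (fun i => (lpnorm p x)^-1 * x i) = 1.
Proof.
by move=> p0 x0; rewrite lpnormZ // gtr0_norm ?invr_gt0 // mulVf ?gt_eqF.
Qed.

Lemma lpnorm_const1_gt0 p m : (0 < m)%N -> (0 < p)%E ->
  0 < lpnorm p (fun _ : 'I_m => 1 : R).
Proof.
move=> m0 p0; have := normr_le_lpnorm (fun _ : 'I_m => 1 : R) (Ordinal m0) p0.
by rewrite normr1; apply: lt_le_trans.
Qed.

Lemma normr_le_lpnorm_from_sphere p q m C : (0 < p)%E -> (0 < q)%E ->
  (forall w : 'I_m -> R, lpnorm q w = 1 -> lpnorm p w <= C) ->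
  forall x : 'I_m -> R, lpnorm p x <= C * lpnorm q x.
Proof.
move=> p0 q0 HC x; have [x0|xq_gt0] := eqVneq (lpnorm q x) 0.
  have {}x0 := proj1 (lpnorm_eq0 _ q0) x0.
  by rewrite (proj2 (lpnorm_eq0 _ p0) x0) (proj2 (lpnorm_eq0 _ q0) x0)
    mulr0.
have {}xq_gt0 : 0 < lpnorm q x by rewrite lt_neqAle eq_sym xq_gt0 lpnorm_ge0.
set N := lpnorm q x in xq_gt0 *.
have -> : lpnorm p x = N * lpnorm p (fun i => N^-1 * x i).
  by rewrite lpnormZ // gtr0_norm ?invr_gt0 // mulrA mulfV ?gt_eqF ?mul1r.
rewrite mulrC; apply: ler_wpM2r; first exact: ltW.
exact/HC/lpnorm_normalize.
Qed.

Lemma lpnorm_sum1 r m (x : 'I_m -> R) : 0 < r ->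
  lpnorm r%:E x = 1 -> \sum_i `|x i| `^ r = 1.
Proof.
move=> r0 /= x1.
by rewrite -(powRKV (lt0r_neq0 r0) (sum_powR_ge0 x r)) x1 powR1.
Qed.

Lemma lpnorm_le1 r m (x : 'I_m -> R) : 0 < r ->
  \sum_i `|x i| `^ r <= 1 -> lpnorm r%:E x <= 1.
Proof.
move=> r0 x1; have -> : 1 = 1 `^ r^-1 :> R by rewrite powR1.
apply: ge0_ler_powR => //.
- by rewrite invr_ge0 ltW.
- by rewrite nnegrE sum_powR_ge0.
- by rewrite nnegrE ler01.
Qed.

Lemma lpnorm_sphere_antimono s r m (w : 'I_m -> R) : 0 < s -> s <= r ->
  lpnorm s%:E w = 1 -> lpnorm r%:E w <= 1.
Proof.
move=> s0 sr w1; have r0 := lt_le_trans s0 sr.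
apply: lpnorm_le1 => //; rewrite -(lpnorm_sum1 s0 w1).
apply: ler_sum => i _; have [->|wi0] := eqVneq `|w i| 0.
  by rewrite !powR0 ?gt_eqF.
apply: ger_powR => //; rewrite lt_neqAle eq_sym wi0 normr_ge0 -w1.
exact: (@normr_le_lpnorm s%:E).
Qed.

Lemma lpnorm_antimono p q m (x : 'I_m -> R) : (0 < p)%E -> (p <= q)%E ->
  lpnorm q x <= lpnorm p x.
Proof.
move=> p0 pq; case: q pq => [r| |] pq; last by case: p p0 pq.
- case: p p0 pq => [s| |] // p0 pq.
  rewrite -[leRHS]mul1r; apply: normr_le_lpnorm_from_sphere => // [|w].
    exact: lt_le_trans pq.
  by apply: lpnorm_sphere_antimono; rewrite -?lee_fin.
- by apply: bigmax_le => [|i _]; [exact: lpnorm_ge0 | exact: normr_le_lpnorm].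
Qed.

(* Hölder's inequality against the constant vector, via Young's inequality
   [a b <= a^P / P + b^Q / Q] with the conjugate exponents [P = r/s] and
   [Q = r/(r-s)] and [b = m^(-1/Q)], chosen so that the [b^Q / Q] terms sum to
   [1/Q]. *)
Lemma sum_powR_le_dim s r m (w : 'I_m -> R) :
  (0 < m)%N -> 0 < s -> s < r ->
  \sum_i `|w i| `^ r = 1 -> \sum_i `|w i| `^ s <= m%:R `^ (1 - s / r).
Proof.
move=> m0 s0 sr w1; have r0 := lt_trans s0 sr.
have rs0 : 0 < r - s by rewrite subr_gt0.
have m_gt0 : 0 < m%:R :> R by rewrite ltr0n.
pose P := r / s; pose Q := r / (r - s).
have P0 : 0 < P by rewrite divr_gt0.
have Q0 : 0 < Q by rewrite divr_gt0.
have PQ : P^-1 + Q^-1 = 1.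
  by rewrite !invf_div -mulrDl addrC subrK mulfV ?gt_eqF.
have Q1 : Q^-1 = 1 - s / r by rewrite invf_div; field; rewrite gt_eqF.
pose b := m%:R `^ (- Q^-1).
have b0 : 0 < b by rewrite powR_gt0.
have bQ : b `^ Q = m%:R^-1.
  by rewrite -powRrM mulNr mulVf ?gt_eqF // powR_inv1 // ltW.
have young i : `|w i| `^ s * b <= `|w i| `^ r / P + m%:R^-1 / Q.
  have := conjugate_powR (powR_ge0 `|w i| s) (ltW b0) P0 Q0 PQ.
  by rewrite bQ -powRrM /P mulrCA mulfV ?gt_eqF ?mulr1.
have : (\sum_i `|w i| `^ s) * b <= 1.
  rewrite mulr_suml; apply: le_trans (ler_sum _ (fun i _ => young i)) _.
  rewrite big_split /= -mulr_suml w1 sumr_const card_ord -mulrnAl.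
  by rewrite -[_ *+ m]mulr_natr mulVf ?gt_eqF // mul1r !div1r PQ.
by rewrite -ler_pdivlMr // div1r /b powRN invrK Q1.
Qed.

Lemma lpnorm_sphere_le_dim s r m (w : 'I_m -> R) :
  (0 < m)%N -> 0 < s -> s < r ->
  lpnorm r%:E w = 1 -> lpnorm s%:E w <= m%:R `^ (s^-1 - r^-1).
Proof.
move=> m0 s0 sr w1; have r0 := lt_trans s0 sr.
have -> : s^-1 - r^-1 = (1 - s / r) * s^-1.
  by field; rewrite !gt_eqF.
rewrite (powRrM m%:R); apply: ge0_ler_powR.
- by rewrite invr_ge0 ltW.
- by rewrite nnegrE sum_powR_ge0.
- by rewrite nnegrE powR_ge0.
exact/sum_powR_le_dim/lpnorm_sum1.
Qed.

Lemma lpnorm_le_dim_pinfty s m (x : 'I_m -> R) : 0 < s ->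
  lpnorm s%:E x <= m%:R `^ s^-1 * lpnorm +oo x.
Proof.
move=> s0; set M := lpnorm +oo x; have M0 : 0 <= M := lpnorm_ge0 _ _.
rewrite -[M in leRHS](powRK (lt0r_neq0 s0) M0) -powRM ?powR_ge0 //.
apply: ge0_ler_powR; rewrite ?nnegrE ?sum_powR_ge0 ?mulr_ge0 ?powR_ge0 //.
  by rewrite invr_ge0 ltW.
rewrite (_ : _ * _ = \sum_(i < m) M `^ s); last first.
  by rewrite sumr_const card_ord mulr_natl.
apply: ler_sum => i _; apply: ge0_ler_powR; rewrite ?nnegrE ?normr_ge0 //.
  exact: ltW.
exact: (@normr_le_lpnorm +oo).
Qed.

Lemma lpnorm_le_dim p q m (x : 'I_m -> R) :
  (0 < m)%N -> (0 < p)%E -> (p <= q)%E ->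
  lpnorm p x <= m%:R `^ (einv p - einv q) * lpnorm q x.
Proof.
move=> m0 p0 pq; case: q pq => [r| |] pq; last by case: p p0 pq.
- case: p p0 pq => [s| |] // p0 pq; rewrite lee_fin in pq.
  have [<-|srne] := eqVneq s r; first by rewrite subrr powRr0 mul1r.
  apply: normr_le_lpnorm_from_sphere => // [|w]; first exact: lt_le_trans pq.
  by apply: lpnorm_sphere_le_dim; rewrite // lt_neqAle srne.
- case: p p0 pq => [s| |] // p0 _; last by rewrite subrr powRr0 mul1r.
  by rewrite /= subr0; apply: lpnorm_le_dim_pinfty.
Qed.

End LpNorm.

Section Tensor.
Variables (R : realType) (k : nat) (d : 'I_k -> nat).
Hypothesis hd : forall n, (0 < d n)%N.
Variable A : tensor R d.

Definition lpsphere (p : \bar R) : set (forall n : 'I_k, 'I_(d n) -> R) :=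
  [set x | forall n, lpnorm p (x n) = 1].

Lemma tformZ (c : 'I_k -> R) (x : forall n : 'I_k, 'I_(d n) -> R) :
  tform A (fun n j => c n * x n j) = (\prod_n c n) * tform A x.
Proof.
rewrite /tform mulr_sumr; apply: eq_bigr => i _.
by rewrite big_split /= mulrCA.
Qed.

Lemma lpsphere_neq0 p : (0 < p)%E -> lpsphere p !=set0.
Proof.
move=> p0.
exists (fun n _ => (lpnorm p (fun _ : 'I_(d n) => 1 : R))^-1 * 1) => n.
exact/lpnorm_normalize/lpnorm_const1_gt0.
Qed.

Lemma tform_le_sum_norm p x : (0 < p)%E -> lpsphere p x ->
  `|tform A x| <= \sum_i `|A i|.
Proof.
move=> p0 x1; rewrite /tform; apply: (le_trans (ler_norm_sum _ _ _)).
apply: ler_sum => i _.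
rewrite normrM normr_prod ler_piMr ?normr_ge0 //.
apply: prodr_ile1 => n _; rewrite normr_ge0 -(x1 n).
exact: normr_le_lpnorm.
Qed.

Lemma tform_le_tnorm p x :
  (0 < p)%E -> lpsphere p x -> tform A x <= tnorm p A.
Proof.
move=> p0 x1; apply: ub_le_sup; last by exists x.
exists (\sum_i `|A i|) => _ [y y1 <-].
exact: le_trans (ler_norm _) (tform_le_sum_norm p0 y1).
Qed.

(* Negating one argument negates [tform A], so the supremum is at least
   [|tform A x|]. *)
Lemma tnorm_ge0 p : (0 < k)%N -> (0 < p)%E -> 0 <= tnorm p A.
Proof.
move=> k0 p0; have [x x1] := lpsphere_neq0 p0.
pose n0 := Ordinal k0; pose c n : R := if n == n0 then -1 else 1.
have cx1 : lpsphere p (fun n j => c n * x n j).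
  move=> n; rewrite lpnormZ // x1 /c.
  by case: ifP; rewrite ?normrN normr1 mulr1.
have c_prod : \prod_n c n = -1.
  by rewrite (bigD1 n0) //= big1 ?mulr1 /c ?eqxx // => n /negbTE ->.
have le_x := tform_le_tnorm p0 x1.
have := tform_le_tnorm p0 cx1; rewrite tformZ c_prod mulN1r => le_negx.
have [x_ge0|/ltW x_le0] := leP 0 (tform A x).
- exact: le_trans le_x.
- by apply: le_trans le_negx; rewrite oppr_ge0.
Qed.

(* Rescaling each [x n] of a [p]-unit family to a [q]-unit vector pulls out the
   factor [lpnorm q (x n) <= K n] by multilinearity. *)
Lemma tnorm_le_prod p q (K : 'I_k -> R) : (0 < p)%E -> (0 < q)%E ->
  (forall n (v : 'I_(d n) -> R), lpnorm q v <= K n * lpnorm p v) ->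
  tnorm p A <= (\prod_n K n) * tnorm q A.
Proof.
move=> p0 q0 HK; apply: ge_sup.
  by have [x x1] := lpsphere_neq0 p0; exists (tform A x), x.
move=> _ [x x1 <-]; pose c n := lpnorm q (x n).
have c_gt0 n : 0 < c n.
  rewrite lt_neqAle lpnorm_ge0 andbT eq_sym; apply/eqP => /(lpnorm_eq0 _ q0) x0.
  move: (x1 n); rewrite (proj2 (lpnorm_eq0 _ p0) x0) => /esym/eqP.
  by rewrite oner_eq0.
have cK : \prod_n c n <= \prod_n K n.
  apply: ler_prod => i _; rewrite (ltW (c_gt0 i)) -[leRHS]mulr1 -(x1 i).
  exact: HK.
pose y n j := (c n)^-1 * x n j.
have y1 : lpsphere q y by move=> n; exact: lpnorm_normalize q0 (c_gt0 n).
have -> : x = fun n j => c n * y n j.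
  apply: functional_extensionality_dep => n; apply: funext => j.
  by rewrite /y mulrA mulfV ?gt_eqF ?mul1r.
rewrite tformZ; apply: le_trans (_ : \prod_n c n * tnorm q A <= _).
  rewrite ler_wpM2l ?prodr_ge0 // => [n _|]; first exact: ltW.
  exact: tform_le_tnorm.
have [k0|k_gt0] := posnP k; last by rewrite ler_wpM2r ?tnorm_ge0.
suff prod1 (f : 'I_k -> R) : \prod_n f n = 1 by rewrite !prod1.
by apply: big1 => n _; have := ltn_ord n; rewrite [X in (_ < X)%N]k0.
Qed.

End Tensor.

Theorem proposition2p4 (R : realType) (k : nat) (d : 'I_k -> nat)
  (hd : forall n, (0 < d n)%N) (A : tensor R d) (p q : \bar R)
  (h1p : (1 <= p)%E) (hpq : (p <= q)%E) :
  tnorm p A <= tnorm q A /\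
  tnorm q A <= (tdim d)%:R `^ (einv p - einv q) * tnorm p A.
Proof.
have p0 : (0 < p)%E by apply: lt_le_trans h1p; rewrite lte_fin ltr01.
have q0 : (0 < q)%E := lt_le_trans p0 hpq.
split.
  have := @tnorm_le_prod _ _ _ hd A p q (fun=> 1) p0 q0.
  rewrite big1 // mul1r; apply=> n v; rewrite mul1r; exact: lpnorm_antimono.
rewrite /tdim natr_prod -prodr_powR => [|n]; last exact: ler0n.
by apply: tnorm_le_prod => // n v; apply: lpnorm_le_dim.
Qed.
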